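(* Let $n \ge 1$ be an integer, let $SV_n = \{C_{1,j} : 1 \le j \le n\}$ (the vertical straight polyomino $R_{1,n}$) and $SH_n = \{C_{i,1} : 1 \le i \le n\}$ (the horizontal straight polyomino $R_{n,1}$), and consider packings on the $n \times n$ board. Then $$\mathrm{cp}_{\mathrm{free}}(SV_n) = \mathrm{cp}_{\mathrm{free}}(SH_n) = \mathrm{cp}_{\mathrm{fixed}}(SV_n) = \mathrm{cp}_{\mathrm{fixed}}(SH_n) = n.$$
   Context: For integers $i,j$, $C_{i,j}$ denotes the unit square cell in column $i$ and row $j$ of the integer grid (columns numbered left to right, rows numbered top to bottom). A polyomino is a finite set of cells; its size is its number of cells. For a polyomino $\mathcal{P}$ of size $n$ the board is $\mathbb{B} = \{C_{i,j} : 1 \le i,j \le n\}$. The shift of $\mathcal{P}$ by integers $(c,d)$ is $\mathcal{P}+(c,d) = \{C_{x+c,y+d} : C_{x,y} \in \mathcal{P}\}$. A set of polyominoes is a valid arrangement if each of them is contained in $\mathbb{B}$ and they are pairwise disjoint (as sets of cells). A fixed copy of $\mathcal{P}$ is any shift of $\mathcal{P}$; a free copy is any shift of any rotation of $\mathcal{P}$ by a multiple of $90^\circ$ (for $SV_n$ and $SH_n$ the free copies are exactly the shifts of $SV_n$ and of $SH_n$). A fixed (resp. free) packing of $\mathcal{P}$ is a set of fixed (resp. free) copies of $\mathcal{P}$ forming a valid arrangement such that adding any further fixed (resp. free) copy of $\mathcal{P}$ yields an invalid arrangement. The clumsy fixed packing number $\mathrm{cp}_{\mathrm{fixed}}(\mathcal{P})$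 (resp. clumsy free packing number $\mathrm{cp}_{\mathrm{free}}(\mathcal{P})$) is the minimum number of polyominoes in a fixed (resp. free) packing of $\mathcal{P}$ on the $n\times n$ board. *)

From Stdlib Require Import ZArith List Arith Lia.
Import ListNotations.
Open Scope Z_scope.

(* C_{i,j} is represented by (i, j) : column i, row j. *)
Definition cell : Type := (Z * Z)%type.

Definition cell_eq_dec : forall a b : cell, {a = b} + {a <> b}.
Proof. decide equality; apply Z.eq_dec. Defined.

(* A polyomino is a finite set of cells, represented by a list (membership = In). *)
Definition polyomino : Type := list cell.

Definition psize (P : polyomino) : nat := length (nodup cell_eq_dec P).

Definition SV (n : nat) : polyomino := map (fun j => (1, Z.of_nat j)) (seq 1 n).
Definition SH (n : nat) : polyomino := map (fun i => (Z.of_nat i, 1)) (seq 1 n).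

Definition in_board (N : nat) (c : cell) : Prop :=
  1 <= fst c <= Z.of_nat N /\ 1 <= snd c <= Z.of_nat N.
Definition contained (N : nat) (P : polyomino) : Prop :=
  forall c, In c P -> in_board N c.

Definition shift (P : polyomino) (c d : Z) : polyomino :=
  map (fun x => (fst x + c, snd x + d)) P.

Definition rot90 (P : polyomino) : polyomino :=
  map (fun x => (- snd x, fst x)) P.

Definition fixed_copy (P Q : polyomino) : Prop :=
  exists c d, Q = shift P c d.
Definition free_copy (P Q : polyomino) : Prop :=
  exists k : nat, (k < 4)%nat /\ fixed_copy (Nat.iter k rot90 P) Q.

Definition disjoint (A B : polyomino) : Prop := forall c, In c A -> ~ In c B.
Definition same_set (A B : polyomino) : Prop := forall c, In c A <-> In c B.

Definition valid (N : nat) (L : list polyomino) : Prop :=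
  Forall (contained N) L /\ ForallOrdPairs disjoint L.

(* packing w.r.t. a notion of copy: valid, and adding any further copy
   (not already a member of the arrangement) gives an invalid arrangement *)
Definition packing (copy : polyomino -> polyomino -> Prop) (P : polyomino)
    (L : list polyomino) : Prop :=
  Forall (copy P) L /\ valid (psize P) L /\
  forall Q, copy P Q -> (forall R, In R L -> ~ same_set Q R) ->
    ~ valid (psize P) (Q :: L).

Definition fixed_packing := packing fixed_copy.
Definition free_packing := packing free_copy.

Definition is_min (S : nat -> Prop) (m : nat) : Prop :=
  S m /\ forall k, S k -> (m <= k)%nat.

Definition cp_fixed_is (P : polyomino) (m : nat) : Prop :=
  is_min (fun k => exists L, fixed_packing P L /\ length L = k) m.
Definition cp_free_is (P : polyomino) (m : nat) : Prop :=
  is_min (fun k => exists L, free_packing P L /\ length L = k) m.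

From Pilot Require Import Defs.
From Stdlib Require Import ZArith List Arith.
From Stdlib Require Import Lia Classical FinFun.
Open Scope Z_scope.

(* Every copy of a straight n-omino lying in the n x n board is a full row or
   a full column.  The n columns (or the n rows) tile the board, hence form a
   packing with n pieces.  Conversely a packing covers every cell c: the
   line through c (a column, or a row for fixed copies of SH_n) could be added
   to the packing unless it meets a piece, and a parallel piece meeting it is
   that very line.  Fixed copies are all parallel, so this settles the fixed
   case.  For free copies the only bad case is a row meeting the column of c
   and a column meeting the row of c; these two pieces cross, so they
   coincide, and being a column that meets the column of c, the piece is the
   column of c.  Since every piece has n cells, covering the n^2 cells needs
   at least n pieces. *)

Lemma in_shift P u v c : In c (Defs.shift P u v) <-> In (fst c - u, snd c - v) P.
Proof.
  unfold Defs.shift; rewrite in_map_iff; split.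
  - intros [[i j] [<- Hx]]; simpl.
    now replace (i + u - u, j + v - v) with (i, j) by (f_equal; lia).
  - intros Hc; exists (fst c - u, snd c - v); split; auto.
    destruct c; simpl; f_equal; lia.
Qed.

Lemma in_rot90 P c : In c (rot90 P) <-> In (snd c, - fst c) P.
Proof.
  unfold rot90; rewrite in_map_iff; split.
  - intros [[i j] [<- Hx]]; simpl.
    now replace (i, - - j) with (i, j) by (f_equal; lia).
  - intros Hc; exists (snd c, - fst c); split; auto.
    destruct c; simpl; f_equal; lia.
Qed.

Definition segment (p q : cell -> Z) (n : nat) (a lo : Z) (Q : polyomino) : Prop :=
  forall c, In c Q <-> p c = a /\ lo <= q c < lo + Z.of_nat n.

Notation vsegment := (segment fst snd).
Notation hsegment := (segment snd fst).
Notation column n a := (vsegment n a 1).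
Notation row n b := (hsegment n b 1).

Definition straight (n : nat) (Q : polyomino) : Prop :=
  (exists a lo, vsegment n a lo Q) \/ (exists b lo, hsegment n b lo Q).

Definition line (n : nat) (Q : polyomino) : Prop :=
  (exists a, column n a Q) \/ (exists b, row n b Q).

Lemma SV_vsegment n : vsegment n 1 1 (SV n).
Proof.
  intro c; unfold SV; rewrite in_map_iff; split.
  - intros [j [<- Hj]]; apply in_seq in Hj; cbn [fst snd]; lia.
  - intros Hc; exists (Z.to_nat (snd c)); split.
    + destruct c; simpl in *; f_equal; lia.
    + apply in_seq; lia.
Qed.

Lemma SH_hsegment n : hsegment n 1 1 (SH n).
Proof.
  intro c; unfold SH; rewrite in_map_iff; split.
  - intros [i [<- Hi]]; apply in_seq in Hi; cbn [fst snd]; lia.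
  - intros Hc; exists (Z.to_nat (fst c)); split.
    + destruct c; simpl in *; f_equal; lia.
    + apply in_seq; lia.
Qed.

Lemma vsegment_shift n a lo Q u v :
  vsegment n a lo Q -> vsegment n (a + u) (lo + v) (Defs.shift Q u v).
Proof. intros HQ c; unfold segment in HQ; rewrite in_shift, HQ; cbn [fst snd]; lia. Qed.

Lemma hsegment_shift n b lo Q u v :
  hsegment n b lo Q -> hsegment n (b + v) (lo + u) (Defs.shift Q u v).
Proof. intros HQ c; unfold segment in HQ; rewrite in_shift, HQ; cbn [fst snd]; lia. Qed.

Lemma vsegment_rot90 n a lo Q :
  vsegment n a lo Q -> hsegment n a (1 - lo - Z.of_nat n) (rot90 Q).
Proof. intros HQ c; unfold segment in HQ; rewrite in_rot90, HQ; cbn [fst snd]; lia. Qed.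

Lemma hsegment_rot90 n b lo Q : hsegment n b lo Q -> vsegment n (- b) lo (rot90 Q).
Proof. intros HQ c; unfold segment in HQ; rewrite in_rot90, HQ; cbn [fst snd]; lia. Qed.

Lemma straight_shift n Q u v : straight n Q -> straight n (Defs.shift Q u v).
Proof.
  intros [[a [lo HQ]] | [b [lo HQ]]].
  - left; do 2 eexists; exact (vsegment_shift _ _ _ _ u v HQ).
  - right; do 2 eexists; exact (hsegment_shift _ _ _ _ u v HQ).
Qed.

Lemma straight_rot90 n Q : straight n Q -> straight n (rot90 Q).
Proof.
  intros [[a [lo HQ]] | [b [lo HQ]]].
  - right; do 2 eexists; exact (vsegment_rot90 _ _ _ _ HQ).
  - left; do 2 eexists; exact (hsegment_rot90 _ _ _ _ HQ).
Qed.

Lemma straight_free_copy n P Q : straight n P -> free_copy P Q -> straight n Q.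
Proof.
  intros HP [k [_ [u [v ->]]]]; apply straight_shift.
  induction k as [|k IH]; simpl; auto using straight_rot90.
Qed.

Lemma vsegment_in_board n a lo Q :
  (1 <= n)%nat -> vsegment n a lo Q -> contained n Q -> column n a Q.
Proof.
  intros Hn HQ HQb.
  assert (Hlo : in_board n (a, lo)) by (apply HQb, HQ; cbn [fst snd]; lia).
  assert (Hhi : in_board n (a, lo + Z.of_nat n - 1)) by (apply HQb, HQ; cbn [fst snd]; lia).
  unfold in_board in *; cbn [fst snd] in *.
  now replace 1 with lo by lia.
Qed.

Lemma hsegment_in_board n b lo Q :
  (1 <= n)%nat -> hsegment n b lo Q -> contained n Q -> row n b Q.
Proof.
  intros Hn HQ HQb.
  assert (Hlo : in_board n (lo, b)) by (apply HQb, HQ; cbn [fst snd]; lia).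
  assert (Hhi : in_board n (lo + Z.of_nat n - 1, b)) by (apply HQb, HQ; cbn [fst snd]; lia).
  unfold in_board in *; cbn [fst snd] in *.
  now replace 1 with lo by lia.
Qed.

Lemma straight_in_board n Q : (1 <= n)%nat -> straight n Q -> contained n Q -> line n Q.
Proof.
  intros Hn [[a [lo HQ]] | [b [lo HQ]]] HQb.
  - left; exists a; exact (vsegment_in_board _ _ _ _ Hn HQ HQb).
  - right; exists b; exact (hsegment_in_board _ _ _ _ Hn HQ HQb).
Qed.

Lemma length_fixed_copy P Q : fixed_copy P Q -> length Q = length P.
Proof. intros [u [v ->]]; apply length_map. Qed.

Lemma length_free_copy P Q : free_copy P Q -> length Q = length P.
Proof.
  intros [k [_ HQ]]; rewrite (length_fixed_copy _ _ HQ); clear HQ.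
  induction k as [|k IH]; [reflexivity |].
  simpl; unfold rot90 at 1; rewrite length_map; exact IH.
Qed.

Lemma free_copy_of_fixed P Q : fixed_copy P Q -> free_copy P Q.
Proof. intros HQ; exists 0%nat; split; [lia | exact HQ]. Qed.

Lemma length_SV n : length (SV n) = n.
Proof. unfold SV; rewrite length_map, length_seq; reflexivity. Qed.

Lemma length_SH n : length (SH n) = n.
Proof. unfold SH; rewrite length_map, length_seq; reflexivity. Qed.

Lemma psize_SV n : psize (SV n) = n.
Proof.
  unfold psize; rewrite nodup_fixed_point; [apply length_SV |].
  apply Injective_map_NoDup; [intros i j E; injection E; lia | apply seq_NoDup].
Qed.

Lemma psize_SH n : psize (SH n) = n.
Proof.
  unfold psize; rewrite nodup_fixed_point; [apply length_SH |].
  apply Injective_map_NoDup; [intros i j E; injection E; lia | apply seq_NoDup].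
Qed.

Lemma fixed_copy_SV_column n Q :
  (1 <= n)%nat -> fixed_copy (SV n) Q -> contained n Q -> exists a, column n a Q.
Proof.
  intros Hn [u [v ->]] HQb; exists (1 + u).
  exact (vsegment_in_board _ _ _ _ Hn (vsegment_shift _ _ _ _ u v (SV_vsegment n)) HQb).
Qed.

Lemma fixed_copy_SH_row n Q :
  (1 <= n)%nat -> fixed_copy (SH n) Q -> contained n Q -> exists b, row n b Q.
Proof.
  intros Hn [u [v ->]] HQb; exists (1 + v).
  exact (hsegment_in_board _ _ _ _ Hn (hsegment_shift _ _ _ _ u v (SH_hsegment n)) HQb).
Qed.

Lemma free_copy_line n P Q :
  (1 <= n)%nat -> straight n P -> free_copy P Q -> contained n Q -> line n Q.
Proof. eauto using straight_in_board, straight_free_copy. Qed.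

Definition col_of_SV (n : nat) (a : Z) : polyomino := Defs.shift (SV n) (a - 1) 0.
Definition row_of_SV (n : nat) (b : Z) : polyomino :=
  Defs.shift (rot90 (SV n)) (Z.of_nat n + 1) (b - 1).
Definition row_of_SH (n : nat) (b : Z) : polyomino := Defs.shift (SH n) 0 (b - 1).
Definition col_of_SH (n : nat) (a : Z) : polyomino := Defs.shift (rot90 (SH n)) (a + 1) 0.

Lemma col_of_SV_column n a : column n a (col_of_SV n a).
Proof.
  intro c; unfold col_of_SV; rewrite in_shift, (SV_vsegment n (_, _)); cbn [fst snd]; lia.
Qed.

Lemma row_of_SV_row n b : row n b (row_of_SV n b).
Proof.
  intro c; unfold row_of_SV; rewrite in_shift, in_rot90, (SV_vsegment n (_, _)).
  cbn [fst snd]; lia.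
Qed.

Lemma row_of_SH_row n b : row n b (row_of_SH n b).
Proof.
  intro c; unfold row_of_SH; rewrite in_shift, (SH_hsegment n (_, _)); cbn [fst snd]; lia.
Qed.

Lemma col_of_SH_column n a : column n a (col_of_SH n a).
Proof.
  intro c; unfold col_of_SH; rewrite in_shift, in_rot90, (SH_hsegment n (_, _)).
  cbn [fst snd]; lia.
Qed.

Lemma row_of_SV_free_copy n b : free_copy (SV n) (row_of_SV n b).
Proof. exists 1%nat; split; [lia |]; do 2 eexists; reflexivity. Qed.

Lemma col_of_SH_free_copy n a : free_copy (SH n) (col_of_SH n a).
Proof. exists 1%nat; split; [lia |]; do 2 eexists; reflexivity. Qed.

Definition covers (L : list polyomino) (c : cell) : Prop := exists R, In R L /\ In c R.

Definition meets (L : list polyomino) (Q : polyomino) : Prop :=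
  exists R c, In R L /\ In c Q /\ In c R.

Definition tiling (n : nat) (L : list polyomino) : Prop :=
  valid n L /\ forall c, in_board n c -> covers L c.

Lemma tiling_packing copy P L :
  Forall (copy P) L -> tiling (psize P) L -> (forall Q, copy P Q -> exists c, In c Q) ->
  packing copy P L.
Proof.
  intros Hcopies [Hvalid Hcover] Hne; split; [exact Hcopies | split; [exact Hvalid |]].
  intros Q HQ _ [Hin Hdisj].
  destruct (Hne Q HQ) as [c Hc].
  destruct (Hcover c (Forall_inv Hin c Hc)) as [R [HR HcR]].
  inversion Hdisj as [| ? ? HQL]; subst.
  exact (proj1 (Forall_forall _ _) HQL R HR c Hc HcR).
Qed.

Lemma packing_meets copy P L Q c :
  packing copy P L -> copy P Q -> contained (psize P) Q -> In c Q -> meets L Q.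
Proof.
  intros [_ [[Hin Hdisj] Hmax]] HQ HQb Hc.
  apply NNPP; intro Hfree.
  apply (Hmax Q HQ).
  - intros R HR Hsame; apply Hfree; exists R, c; split; [| split]; auto.
    apply Hsame, Hc.
  - split; constructor; auto.
    apply Forall_forall; intros R HR d HdQ HdR; apply Hfree; exists R, d; auto.
Qed.

Lemma NoDup_list_prod {A B : Type} (l : list A) (l' : list B) :
  NoDup l -> NoDup l' -> NoDup (list_prod l l').
Proof.
  induction 1 as [|a l Ha Hl IH]; intros Hl'; simpl; [constructor |].
  apply NoDup_app; auto.
  - apply Injective_map_NoDup; auto. intros x y E; injection E; auto.
  - intros [x y] Hxy Hprod.
    apply in_map_iff in Hxy as [z [E _]]; injection E as -> ->.
    apply in_prod_iff in Hprod as [Ha' _]; auto.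
Qed.

Lemma length_concat_le {A : Type} m (L : list (list A)) :
  (forall R, In R L -> (length R <= m)%nat) -> (length (concat L) <= m * length L)%nat.
Proof.
  induction L as [|R L IH]; intros HL; simpl; [lia |].
  rewrite length_app.
  assert (length R <= m)%nat by (apply HL; left; reflexivity).
  assert (length (concat L) <= m * length L)%nat by (apply IH; intros; apply HL; right; assumption).
  lia.
Qed.

Lemma covering_length_bound n L :
  (1 <= n)%nat -> (forall R, In R L -> (length R <= n)%nat) ->
  (forall c, in_board n c -> covers L c) -> (n <= length L)%nat.
Proof.
  intros Hn HL Hcover.
  set (s := map Z.of_nat (seq 1 n)).
  assert (Hs : NoDup s) by (apply Injective_map_NoDup; [intros i j; lia | apply seq_NoDup]).
  assert (Hincl : incl (list_prod s s) (concat L)).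
  { intros [x y] Hxy; apply in_prod_iff in Hxy as [Hx Hy].
    apply in_map_iff in Hx as [i [<- Hi]], Hy as [j [<- Hj]].
    apply in_seq in Hi, Hj.
    destruct (Hcover (Z.of_nat i, Z.of_nat j)) as [R [HR HcR]]; [unfold in_board; simpl; lia |].
    apply in_concat; eauto. }
  pose proof (NoDup_incl_length (NoDup_list_prod _ _ Hs Hs) Hincl) as Hcount.
  rewrite length_prod in Hcount; unfold s in Hcount; rewrite length_map, length_seq in Hcount.
  (* [cell] is only convertible to [Z * Z], so [nia] would see two different lengths *)
  change (n * n <= length (A := cell) (concat L))%nat in Hcount.
  pose proof (length_concat_le n L HL).
  nia.
Qed.

Lemma packing_number copy P n L0 :
  (1 <= n)%nat -> psize P = n -> (forall Q, copy P Q -> length Q = n) ->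
  Forall (copy P) L0 -> tiling n L0 -> length L0 = n ->
  (forall L, packing copy P L -> forall c, in_board n c -> covers L c) ->
  is_min (fun k => exists L, packing copy P L /\ length L = k) n.
Proof.
  intros Hn HP Hlen Hcopies Htiling HL0 Hcover; split.
  - exists L0; split; [| exact HL0].
    apply tiling_packing; [exact Hcopies | rewrite HP; exact Htiling |].
    intros Q HQ; destruct Q as [| c Q]; [specialize (Hlen _ HQ); simpl in Hlen; lia |].
    exists c; left; reflexivity.
  - intros k [L [HLp <-]].
    apply covering_length_bound; [exact Hn | | exact (Hcover L HLp)].
    intros R HR; destruct HLp as [HLcopies _].
    rewrite (Hlen R (proj1 (Forall_forall _ _) HLcopies R HR)); lia.
Qed.

Section ParallelLines.

Variables (p q : cell -> Z) (n : nat).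
Hypothesis board_pq : forall c, in_board n c <-> 1 <= p c <= Z.of_nat n /\ 1 <= q c <= Z.of_nat n.

Lemma segment_contained a Q : 1 <= a <= Z.of_nat n -> segment p q n a 1 Q -> contained n Q.
Proof. intros Ha HQ c Hc; apply board_pq; apply HQ in Hc; lia. Qed.

Lemma parallel_lines_tiling (F : Z -> polyomino) :
  (forall a, segment p q n a 1 (F a)) -> tiling n (map (fun i => F (Z.of_nat i)) (seq 1 n)).
Proof.
  intros HF; split; [split |].
  - apply Forall_forall; intros R HR; apply in_map_iff in HR as [i [<- Hi]].
    apply in_seq in Hi; apply (segment_contained (Z.of_nat i)); [lia | apply HF].
  - induction (seq_NoDup n 1) as [| i s Hi Hs IH]; simpl; constructor; [| exact IH].
    apply Forall_forall; intros R HR c Hci Hcj.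
    apply in_map_iff in HR as [j [<- Hj]].
    apply HF in Hci, Hcj; apply Hi; replace j with i in Hj by lia; exact Hj.
  - intros c Hc; apply board_pq in Hc.
    exists (F (p c)); split; [| apply HF; lia].
    apply in_map_iff; exists (Z.to_nat (p c)); split.
    + rewrite Z2Nat.id by lia; reflexivity.
    + apply in_seq; lia.
Qed.

Lemma packing_covers_parallel copy P L c :
  psize P = n ->
  (forall a, 1 <= a <= Z.of_nat n -> exists Q, copy P Q /\ segment p q n a 1 Q) ->
  (forall Q, copy P Q -> contained n Q -> exists a, segment p q n a 1 Q) ->
  packing copy P L -> in_board n c -> covers L c.
Proof.
  intros HP Hlines Hclass HL Hc; apply board_pq in Hc.
  destruct (Hlines (p c)) as [Q [HQ HQline]]; [lia |].
  assert (HcQ : In c Q) by (apply HQline; lia).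
  assert (HQin : contained (psize P) Q) by (rewrite HP; apply (segment_contained (p c)); auto; lia).
  destruct (packing_meets _ _ _ _ _ HL HQ HQin HcQ) as [R [d [HR [HdQ HdR]]]].
  destruct HL as [HLcopies [[HLin _] _]]; rewrite HP in HLin.
  rewrite Forall_forall in HLcopies, HLin.
  destruct (Hclass R (HLcopies R HR) (HLin R HR)) as [a HRline].
  exists R; split; [exact HR |].
  apply HQline in HdQ; apply HRline in HdR; apply HRline; lia.
Qed.

End ParallelLines.

Lemma in_board_snd_fst n c :
  in_board n c <-> 1 <= snd c <= Z.of_nat n /\ 1 <= fst c <= Z.of_nat n.
Proof. unfold in_board; tauto. Qed.

Lemma crossing_lines_cover n L Q Q' x y :
  ForallOrdPairs disjoint L -> (forall R, In R L -> line n R) ->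
  column n x Q -> row n y Q' -> meets L Q -> meets L Q' ->
  1 <= x <= Z.of_nat n -> 1 <= y <= Z.of_nat n -> covers L (x, y).
Proof.
  intros Hdisj Hlines HQ HQ' [R1 [d1 [HR1 [Hd1Q Hd1R]]]] [R2 [d2 [HR2 [Hd2Q Hd2R]]]] Hx Hy.
  apply HQ in Hd1Q; apply HQ' in Hd2Q.
  destruct (Hlines R1 HR1) as [[a1 HR1col] | [b HR1row]].
  { exists R1; split; [exact HR1 |]; apply HR1col in Hd1R; apply HR1col; cbn [fst snd]; lia. }
  destruct (Hlines R2 HR2) as [[a HR2col] | [b2 HR2row]].
  { pose proof (proj1 (HR1row d1) Hd1R); pose proof (proj1 (HR2col d2) Hd2R).
    (* the row R1 and the column R2 cross at (a, b), so they are the same piece *)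
    assert (HR12 : R1 = R2).
    { assert (H1 : In (a, b) R1) by (apply HR1row; cbn [fst snd]; lia).
      assert (H2 : In (a, b) R2) by (apply HR2col; cbn [fst snd]; lia).
      destruct (ForallOrdPairs_In Hdisj R1 R2 HR1 HR2) as [E | [D | D]];
        [exact E | destruct (D _ H1 H2) | destruct (D _ H2 H1)]. }
    subst R2; apply HR2col in Hd1R.
    exists R1; split; [exact HR1 |]; apply HR2col; cbn [fst snd]; lia. }
  exists R2; split; [exact HR2 |]; apply HR2row in Hd2R; apply HR2row; cbn [fst snd]; lia.
Qed.

Lemma packing_covers_lines copy P n L :
  psize P = n ->
  (forall a, exists Q, copy P Q /\ column n a Q) ->
  (forall b, exists Q, copy P Q /\ row n b Q) ->
  (forall Q, copy P Q -> contained n Q -> line n Q) ->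
  packing copy P L -> forall c, in_board n c -> covers L c.
Proof.
  intros HP Hcols Hrows Hclass HL [x y] Hc; pose proof Hc as [Hx Hy]; cbn [fst snd] in Hx, Hy.
  destruct (Hcols x) as [Q [HQ HQcol]], (Hrows y) as [Q' [HQ' HQ'row]].
  assert (HQin : contained (psize P) Q)
    by (rewrite HP; exact (segment_contained _ _ _ (fun c => iff_refl _) x Q Hx HQcol)).
  assert (HQ'in : contained (psize P) Q')
    by (rewrite HP; exact (segment_contained _ _ _ (in_board_snd_fst n) y Q' Hy HQ'row)).
  pose proof (packing_meets _ _ _ _ (x, y) HL HQ HQin ltac:(apply HQcol; cbn [fst snd]; lia)).
  pose proof (packing_meets _ _ _ _ (x, y) HL HQ' HQ'in ltac:(apply HQ'row; cbn [fst snd]; lia)).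
  destruct HL as [HLcopies [[HLin HLdisj] _]]; rewrite HP in HLin.
  rewrite Forall_forall in HLcopies, HLin.
  apply (crossing_lines_cover n L Q Q'); auto.
Qed.

Lemma col_of_SV_fixed_copy n a : fixed_copy (SV n) (col_of_SV n a).
Proof. do 2 eexists; reflexivity. Qed.

Lemma row_of_SH_fixed_copy n b : fixed_copy (SH n) (row_of_SH n b).
Proof. do 2 eexists; reflexivity. Qed.

Definition columns (n : nat) : list polyomino := map (fun i => col_of_SV n (Z.of_nat i)) (seq 1 n).
Definition rows (n : nat) : list polyomino := map (fun j => row_of_SH n (Z.of_nat j)) (seq 1 n).

Lemma columns_fixed_copies n : Forall (fixed_copy (SV n)) (columns n).
Proof.
  apply Forall_forall; intros R HR; apply in_map_iff in HR as [i [<- _]].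
  apply col_of_SV_fixed_copy.
Qed.

Lemma rows_fixed_copies n : Forall (fixed_copy (SH n)) (rows n).
Proof.
  apply Forall_forall; intros R HR; apply in_map_iff in HR as [j [<- _]].
  apply row_of_SH_fixed_copy.
Qed.

Lemma columns_tiling n : tiling n (columns n).
Proof. exact (parallel_lines_tiling _ _ n (fun c => iff_refl _) _ (col_of_SV_column n)). Qed.

Lemma rows_tiling n : tiling n (rows n).
Proof. exact (parallel_lines_tiling _ _ n (in_board_snd_fst n) _ (row_of_SH_row n)). Qed.

Lemma length_columns n : length (columns n) = n.
Proof. unfold columns; rewrite length_map, length_seq; reflexivity. Qed.

Lemma length_rows n : length (rows n) = n.
Proof. unfold rows; rewrite length_map, length_seq; reflexivity. Qed.

Lemma cp_fixed_SV n : (1 <= n)%nat -> cp_fixed_is (SV n) n.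
Proof.
  intros Hn; apply (packing_number _ _ n (columns n)); auto using psize_SV, columns_fixed_copies,
    columns_tiling, length_columns.
  - intros Q HQ; rewrite (length_fixed_copy _ _ HQ); apply length_SV.
  - intros L HL c; apply (packing_covers_parallel _ _ n (fun c => iff_refl _) fixed_copy _ _ _ (psize_SV n));
      auto using fixed_copy_SV_column.
    intros a _; exists (col_of_SV n a); auto using col_of_SV_fixed_copy, col_of_SV_column.
Qed.

Lemma cp_fixed_SH n : (1 <= n)%nat -> cp_fixed_is (SH n) n.
Proof.
  intros Hn; apply (packing_number _ _ n (rows n)); auto using psize_SH, rows_fixed_copies,
    rows_tiling, length_rows.
  - intros Q HQ; rewrite (length_fixed_copy _ _ HQ); apply length_SH.
  - intros L HL c; apply (packing_covers_parallel _ _ n (in_board_snd_fst n) fixed_copy _ _ _ (psize_SH n));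
      auto using fixed_copy_SH_row.
    intros b _; exists (row_of_SH n b); auto using row_of_SH_fixed_copy, row_of_SH_row.
Qed.

Lemma cp_free_SV n : (1 <= n)%nat -> cp_free_is (SV n) n.
Proof.
  intros Hn; apply (packing_number _ _ n (columns n)); auto using psize_SV, columns_tiling,
    length_columns.
  - intros Q HQ; rewrite (length_free_copy _ _ HQ); apply length_SV.
  - exact (Forall_impl _ (free_copy_of_fixed _) (columns_fixed_copies n)).
  - intros L; apply (packing_covers_lines free_copy (SV n) n L); [apply psize_SV | | |].
    + intros a; exists (col_of_SV n a); auto using free_copy_of_fixed, col_of_SV_fixed_copy,
        col_of_SV_column.
    + intros b; exists (row_of_SV n b); auto using row_of_SV_free_copy, row_of_SV_row.
    + intros Q; apply free_copy_line; [exact Hn | left; exists 1, 1; apply SV_vsegment].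
Qed.

Lemma cp_free_SH n : (1 <= n)%nat -> cp_free_is (SH n) n.
Proof.
  intros Hn; apply (packing_number _ _ n (rows n)); auto using psize_SH, rows_tiling, length_rows.
  - intros Q HQ; rewrite (length_free_copy _ _ HQ); apply length_SH.
  - exact (Forall_impl _ (free_copy_of_fixed _) (rows_fixed_copies n)).
  - intros L; apply (packing_covers_lines free_copy (SH n) n L); [apply psize_SH | | |].
    + intros a; exists (col_of_SH n a); auto using col_of_SH_free_copy, col_of_SH_column.
    + intros b; exists (row_of_SH n b); auto using free_copy_of_fixed, row_of_SH_fixed_copy,
        row_of_SH_row.
    + intros Q; apply free_copy_line; [exact Hn | right; exists 1, 1; apply SH_hsegment].
Qed.

Theorem theorem1 (n : nat) (Hn : (1 <= n)%nat) :
  cp_free_is (SV n) n /\ cp_free_is (SH n) n /\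
  cp_fixed_is (SV n) n /\ cp_fixed_is (SH n) n.
Proof. auto using cp_free_SV, cp_free_SH, cp_fixed_SV, cp_fixed_SH. Qed.
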